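(* Assume the standing assumptions below, and let $\Delta>0$ be a constant such that for every $N\in 2h^\star\mathbb N$ and every state $\underline\sigma\in\{\pm1\}^{\Lambda_N}$ whose block array is not $(h^\star,\ldots,h^\star)$ one has $E_N(\underline\sigma)-Ne(h^\star)>\Delta$ (such a $\Delta$, independent of $N$, exists by the energy-gap result of Giuliani–Lebowitz–Lieb). Then for every $N\in\mathbb N$ and every state $\underline\sigma\in\{\pm1\}^{\Lambda_N}$ whose block array is not $(h^\star,\ldots,h^\star)$, $$F_N(\underline\sigma)\ge \tilde\Delta:=\frac{\Delta}{2h^\star}.$$ In particular, if $N$ is not a multiple of $2h^\star$, then $F_N(\underline\sigma)\ge\tilde\Delta$ for every $\underline\sigma\in\{\pm1\}^{\Lambda_N}$.
   Context: Fix $p>1$ and $J>0$. For $N\in\mathbb N$ let $\Lambda_N=\mathbb Z/N\mathbb Z$; a state is $\underline\sigma\in\{\pm1\}^{\Lambda_N}$, identified with its $N$-periodic extension to $\mathbb Z$ (so it can also be regarded as a state in $\{\pm1\}^{\Lambda_{MN}}$ for any $M\in\mathbb N$). The energy is $$E_N(\underline\sigma)=-J\sum_{i\in\Lambda_N}\sigma_i\sigma_{i+1}+\sum_{i=1}^N\sum_{j\in\mathbb Z,\,j\neq i}\frac{\sigma_i\sigma_j}{|i-j|^p} =-J\sum_{i\in\Lambda_N}\sigma_i\sigma_{i+1}+\sum_{i,j\in\Lambda_N,\,i\neq j}\sum_{n\in\mathbb Z}\frac{\sigma_i\sigma_j}{|i-j+nN|^p}+\frac{2}{N^{p-1}}\sum_{n\ge1}\frac1{n^p}.$$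 Block arrays: up to a translation (which does not change the energy), every state is described by the cyclic array $(h_1,\ldots,h_M)$ of lengths of its maximal runs of consecutive equal spins (cyclically), consecutive blocks having opposite signs, $h_1+\cdots+h_M=N$ ($M$ even if $M>1$); we write $E_N(h_1,\ldots,h_M)$ for the energy of such a state. For $h\in\mathbb N$, $e(h)=E_{2h}(h,h)/(2h)$ is the $h$-periodic energy per site. Standing assumptions: either $1<p\le2$, or $p>2$ and $J<J_p:=\frac1{\Gamma(p)}\int_0^\infty\frac{\alpha^{p-1}e^{-\alpha}}{(1-e^{-\alpha})^2}d\alpha$; and $e$ has a unique minimizer $h^\star$ on $\mathbb N$. The renormalized energy is $F_N(\underline\sigma)=E_N(\underline\sigma)-Ne(h^\star)$. *)

From Stdlib Require Import Reals ZArith Lra Lia.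
From Coquelicot Require Import Coquelicot.
Open Scope R_scope.

(* A spin configuration on Lambda_N is identified with its N-periodic
   extension to Z; spins are encoded as booleans (true = +1, false = -1). *)
Definition spin (b : bool) : R := if b then 1 else -1.

Definition periodic (N : nat) (sigma : Z -> bool) : Prop :=
  forall i : Z, sigma (i + Z.of_nat N)%Z = sigma i.

Fixpoint fsum (n : nat) (f : nat -> R) : R :=
  match n with
  | O => 0
  | S m => fsum m f + f m
  end.

(* Contribution of site i and distance d >= 1 to  sum_{j <> i} s_i s_j / |i-j|^p :
   the two sites j = i + d and j = i - d. *)
Definition pair_term (p : R) (sigma : Z -> bool) (i : Z) (d : nat) : R :=
  spin (sigma i) * (spin (sigma (i + Z.of_nat d)%Z) + spin (sigma (i - Z.of_nat d)%Z))
    / Rpower (INR d) p.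

(* E_N(sigma) = -J sum_{i in Lambda_N} s_i s_{i+1}
               + sum_{i=1}^N sum_{j in Z, j <> i} s_i s_j / |i-j|^p *)
Definition energy (J p : R) (N : nat) (sigma : Z -> bool) : R :=
  - J * fsum N (fun k => spin (sigma (Z.of_nat (S k))) * spin (sigma (Z.of_nat (S k) + 1)%Z))
  + fsum N (fun k => Series (fun n => pair_term p sigma (Z.of_nat (S k)) (S n))).

(* The state with block array (h, h) on Lambda_{2h}, periodically extended:
   blocks of h plus spins alternating with blocks of h minus spins. *)
Definition alt (h : nat) (i : Z) : bool :=
  Z.ltb (Z.modulo i (2 * Z.of_nat h)%Z) (Z.of_nat h).

Definition e_per (J p : R) (h : nat) : R :=
  energy J p (2 * h) (alt h) / INR (2 * h).

Definition renorm_energy (J p : R) (hstar N : nat) (sigma : Z -> bool) : R :=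
  energy J p N sigma - INR N * e_per J p hstar.

(* sigma has block array (h, ..., h) (an even number >= 2 of blocks of
   length h), i.e. it is a translate of the alternating h-block state. *)
Definition has_uniform_blocks (h : nat) (sigma : Z -> bool) : Prop :=
  exists t : Z, forall i : Z, sigma i = alt h (i + t)%Z.

Definition Gamma_fun (p : R) : R :=
  RInt_gen (fun t => Rpower t (p - 1) * exp (- t)) (at_right 0) (Rbar_locally p_infty).

Definition J_crit (p : R) : R :=
  / Gamma_fun p *
  RInt_gen (fun a => Rpower a (p - 1) * exp (- a) / (1 - exp (- a)) ^ 2)
           (at_right 0) (Rbar_locally p_infty).

Definition standing (J p : R) (hstar : nat) : Prop :=
  1 < p /\ 0 < J /\
  (p <= 2 \/ (2 < p /\ J < J_crit p)) /\
  (1 <= hstar)%nat /\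
  (forall h : nat, (1 <= h)%nat -> h <> hstar -> e_per J p hstar < e_per J p h).

(* A state of period N also has period 2h N, and since the energy is a sum of
   N-periodic site contributions, F_(2h N) = 2h F_N, where h = hstar.  If the
   block array is not (h, ..., h), the gap hypothesis at size 2h N gives
   2h F_N > Delta.  When 2h does not divide N, no translate of the alternating
   h-block state is N-periodic, so the first bound applies to every state. *)
From Stdlib Require Import Reals ZArith Lra Lia.
From Coquelicot Require Import Coquelicot.
Open Scope R_scope.

Lemma fsum_ext (n : nat) (f g : nat -> R) :
  (forall k, f k = g k) -> fsum n f = fsum n g.
Proof. intros H; induction n as [|n IH]; simpl; [reflexivity | now rewrite IH, H]. Qed.

Lemma fsum_add (a b : nat) (f : nat -> R) :
  fsum (a + b) f = fsum a f + fsum b (fun k => f (a + k)%nat).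
Proof.
  induction b as [|b IH]; simpl.
  - rewrite Nat.add_0_r; ring.
  - rewrite Nat.add_succ_r; simpl; rewrite IH; ring.
Qed.

Lemma periodic_fun_mul (N m : nat) (f : nat -> R) :
  (forall k, f (k + N)%nat = f k) -> forall k, f (m * N + k)%nat = f k.
Proof.
  intros Hf k; induction m as [|m IH]; [reflexivity|].
  replace (S m * N + k)%nat with ((m * N + k) + N)%nat by lia.
  now rewrite Hf.
Qed.

Lemma fsum_mul_period (N m : nat) (f : nat -> R) :
  (forall k, f (k + N)%nat = f k) -> fsum (m * N) f = INR m * fsum N f.
Proof.
  intros Hf; induction m as [|m IH]; [simpl; ring|].
  replace (S m * N)%nat with (m * N + N)%nat by lia.
  rewrite fsum_add, IH, (fsum_ext N _ f (periodic_fun_mul N m f Hf)), S_INR; ring.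
Qed.

Lemma periodic_mul (N k : nat) (sigma : Z -> bool) :
  periodic N sigma -> periodic (k * N) sigma.
Proof.
  intros H; induction k as [|k IH]; intros i.
  - simpl; f_equal; lia.
  - replace (i + Z.of_nat (S k * N))%Z with ((i + Z.of_nat (k * N)) + Z.of_nat N)%Z by lia.
    now rewrite H.
Qed.

Lemma energy_mul_period (J p : R) (N m : nat) (sigma : Z -> bool) :
  periodic N sigma -> energy J p (m * N) sigma = INR m * energy J p N sigma.
Proof.
  intros H.
  assert (shift : forall k (d : Z),
    sigma (Z.of_nat (S (k + N)) + d)%Z = sigma (Z.of_nat (S k) + d)%Z).
  { intros k d.
    replace (Z.of_nat (S (k + N)) + d)%Z with ((Z.of_nat (S k) + d) + Z.of_nat N)%Z by lia.
    apply H. }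
  assert (shift0 : forall k, sigma (Z.of_nat (S (k + N))) = sigma (Z.of_nat (S k))).
  { intros k; rewrite <- (Z.add_0_r (Z.of_nat (S (k + N)))), shift; f_equal; lia. }
  unfold energy; rewrite !fsum_mul_period; [ring | |].
  - intros k; apply Series_ext; intros n; unfold pair_term, Z.sub.
    now rewrite shift0, !shift.
  - intros k; now rewrite shift0, shift.
Qed.

Lemma renorm_energy_mul_period (J p : R) (hstar N m : nat) (sigma : Z -> bool) :
  periodic N sigma ->
  renorm_energy J p hstar (m * N) sigma = INR m * renorm_energy J p hstar N sigma.
Proof.
  intros H; unfold renorm_energy; rewrite energy_mul_period, mult_INR by exact H; ring.
Qed.

Lemma alt_period_divide (h N : nat) : (1 <= h)%nat ->
  (forall j, alt h (j + Z.of_nat N)%Z = alt h j) -> Nat.divide (2 * h) N.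
Proof.
  intros Hh HP; unfold alt in HP.
  set (H2 := (2 * Z.of_nat h)%Z) in *.
  set (r := (Z.of_nat N mod H2)%Z).
  assert (Hr : (0 <= r < H2)%Z) by (apply Z.mod_pos_bound; unfold H2; lia).
  assert (Hm : forall j, ((j + Z.of_nat N) mod H2 = (j + r) mod H2)%Z).
  { intros j; unfold r; now rewrite Z.add_mod_idemp_r by (unfold H2; lia). }
  destruct (Z.eq_dec r 0) as [E|E].
  - apply Nat.mod_divide; [lia|].
    apply Nat2Z.inj; now rewrite Nat2Z.inj_mod, Nat2Z.inj_mul.
  - exfalso.
    (* a shift by r, 0 < r < 2h, moves some site across a block boundary *)
    destruct (Z_lt_le_dec r (Z.of_nat h)) as [Hl|Hl].
    + specialize (HP (Z.of_nat h - r)%Z); rewrite Hm in HP.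
      replace (Z.of_nat h - r + r)%Z with (Z.of_nat h) in HP by lia.
      rewrite (Z.mod_small (Z.of_nat h)), (Z.mod_small (Z.of_nat h - r)),
        Z.ltb_irrefl in HP by (unfold H2; lia).
      assert (Z.ltb (Z.of_nat h - r) (Z.of_nat h) = true) by (apply Z.ltb_lt; lia).
      congruence.
    + specialize (HP 0%Z); rewrite Hm, Z.add_0_l, Z.mod_small, Z.mod_0_l in HP by lia.
      assert (Z.ltb r (Z.of_nat h) = false) by (apply Z.ltb_ge; lia).
      assert (Z.ltb 0 (Z.of_nat h) = true) by (apply Z.ltb_lt; lia).
      congruence.
Qed.

Lemma uniform_blocks_period_divide (h N : nat) (sigma : Z -> bool) :
  (1 <= h)%nat -> periodic N sigma -> has_uniform_blocks h sigma ->
  Nat.divide (2 * h) N.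
Proof.
  intros Hh HP [t Ht]; apply alt_period_divide; [exact Hh|]; intros j.
  specialize (HP (j - t)%Z); rewrite !Ht in HP.
  now replace (j - t + Z.of_nat N + t)%Z with (j + Z.of_nat N)%Z in HP by lia;
      replace (j - t + t)%Z with j in HP by lia.
Qed.

Theorem mainTheorem1 (J p : R) (hstar : nat) (Delta : R) :
  standing J p hstar ->
  0 < Delta ->
  (forall (m : nat) (sigma : Z -> bool), (1 <= m)%nat ->
     periodic (2 * hstar * m) sigma ->
     ~ has_uniform_blocks hstar sigma ->
     renorm_energy J p hstar (2 * hstar * m) sigma > Delta) ->
  (forall (N : nat) (sigma : Z -> bool), (1 <= N)%nat ->
     periodic N sigma ->
     ~ has_uniform_blocks hstar sigma ->
     renorm_energy J p hstar N sigma >= Delta / INR (2 * hstar))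
  /\
  (forall (N : nat) (sigma : Z -> bool), (1 <= N)%nat ->
     ~ (Nat.divide (2 * hstar) N) ->
     periodic N sigma ->
     renorm_energy J p hstar N sigma >= Delta / INR (2 * hstar)).
Proof.
  intros (_ & _ & _ & Hh & _) _ Hgap.
  assert (Bound : forall (N : nat) (sigma : Z -> bool), (1 <= N)%nat ->
     periodic N sigma -> ~ has_uniform_blocks hstar sigma ->
     renorm_energy J p hstar N sigma >= Delta / INR (2 * hstar)).
  { intros N sigma HN HP HU.
    pose proof (Hgap N sigma HN (periodic_mul N (2 * hstar) sigma HP) HU) as gap.
    rewrite renorm_energy_mul_period in gap by exact HP.
    assert (Hpos : 0 < INR (2 * hstar)) by (apply lt_0_INR; lia).
    apply Rle_ge, (Rmult_le_reg_l (INR (2 * hstar))); [exact Hpos|].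
    field_simplify; lra. }
  split; [exact Bound|].
  intros N sigma HN Hd HP; apply Bound; [exact HN | exact HP |].
  intros HU; exact (Hd (uniform_blocks_period_divide hstar N sigma Hh HP HU)).
Qed.
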